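(* Let $n\ge 3$, $k\ge 2$, and let $a,b\ge 2$ be integers with $a+b=k+1$. Let $G$ be a spanning subgraph of $CT_n$ containing no cycle of length $4k+2$. If $C$ is a cycle of length $4a$ in $G$ and $C'$ is a cycle of length $4b$ in $G$, and $C$ and $C'$ have at least one common edge, then $|\mathrm{supp}(C)\cap\mathrm{supp}(C')|\ge 3$.
   Context: $\mathrm{S}_n$ is the symmetric group on $\{1,\dots,n\}$; $\mathrm{supp}(x)=\{i:i^x\ne i\}$. $CT_n$ has vertex set $\mathrm{S}_n$, with $\{x,y\}$ an edge iff $yx^{-1}$ is a transposition. The support of an edge $\{u,z\}$ is $\mathrm{supp}(\{u,z\})=\mathrm{supp}(zu^{-1})$, and for a subgraph $H$ of $CT_n$, $\mathrm{supp}(H)=\bigcup_{\{u,z\}\in E(H)}\mathrm{supp}(\{u,z\})$. *)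

From mathcomp Require Import all_boot all_order all_fingroup.
Set Implicit Arguments. Unset Strict Implicit. Unset Printing Implicit Defensive.
Local Open Scope group_scope.

Section CT.
Variable n : nat.

Definition psupp (x : 'S_n) : {set 'I_n} := [set i | x i != i].

Definition is_transp (x : 'S_n) : bool :=
  [exists i : 'I_n, exists j : 'I_n, (i != j) && (x == tperm i j)].

(* MathComp composes permutations left-to-right ((s * t) i = t (s i)),
   matching the paper's right action i^x, so y x^{-1} is [y * x^-1]. *)
Definition CT_adj (x y : 'S_n) : bool := is_transp (y * x^-1).

Definition edge_supp (u z : 'S_n) : {set 'I_n} := psupp (z * u^-1).

Definition spanning_subgraph_CT (G : rel 'S_n) : Prop :=
  symmetric G /\ (forall x y, G x y -> CT_adj x y).

Definition is_cycle_of_length (G : rel 'S_n) (m : nat) (c : seq 'S_n) : bool :=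
  [&& 3 <= m, size c == m, uniq c & path.cycle G c].

Definition cycle_edges (c : seq 'S_n) : seq ('S_n * 'S_n) := zip c (rot 1 c).

Definition cycle_supp (c : seq 'S_n) : {set 'I_n} :=
  \bigcup_(e <- cycle_edges c) edge_supp e.1 e.2.

Definition common_edge (c c' : seq 'S_n) : bool :=
  has (fun e => ((e \in cycle_edges c') || ((e.2, e.1) \in cycle_edges c')))
      (cycle_edges c).

End CT.

From mathcomp Require Import all_boot all_order all_fingroup zify.
Set Implicit Arguments. Unset Strict Implicit. Unset Printing Implicit Defensive.

(* Let {x, y} be a common edge of the cycles C and C', so that
   y x^-1 is a transposition (i j), and suppose |supp(C) ∩ supp(C')| <= 2.
   For any two vertices x, w of a cycle, w x^-1 is the product of the edge
   permutations along the cycle from x to w, hence supp(w x^-1) ⊆ supp(C).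
   Since {i, j} ⊆ supp(C) ∩ supp(C') has at most two elements, these sets are
   equal, so a vertex w lying on both cycles has w x^-1 ∈ {1, (i j)}, i.e.
   w ∈ {x, y}.  Removing the edge {x, y} from C and C' leaves two paths between
   x and y which are internally disjoint; gluing them yields a cycle of length
   4a + 4b - 2 = 4k + 2 in G, a contradiction. *)

Section ZipRot.
Variables (S T : Type).

Lemma take_zip (s : seq S) (t : seq T) r : take r (zip s t) = zip (take r s) (take r t).
Proof. by elim: s t r => [|x s IH] [|y t] [|r] //=; rewrite IH. Qed.

Lemma drop_zip (s : seq S) (t : seq T) r : drop r (zip s t) = zip (drop r s) (drop r t).
Proof. by elim: s t r => [|x s IH] [|y t] [|r] //=; case: (drop _ _). Qed.

Lemma rot_zip (s : seq S) (t : seq T) r : size s = size t ->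
  rot r (zip s t) = zip (rot r s) (rot r t).
Proof.
by move=> st; rewrite /rot drop_zip take_zip zip_cat // !size_drop st.
Qed.

End ZipRot.

Section PermSupport.
Variable n : nat.
Local Open Scope group_scope.
Implicit Types (g h w x y : 'S_n) (T : {set 'I_n}).

Lemma psupp_perm_on T g : (psupp g \subset T) = perm_on T g.
Proof. by apply: eq_subset => i; rewrite inE. Qed.

Lemma psuppM g h : psupp (g * h) \subset psupp g :|: psupp h.
Proof.
by rewrite psupp_perm_on; apply: perm_onM; rewrite -psupp_perm_on ?subsetUl ?subsetUr.
Qed.

Lemma mem_psupp_tperm (i j : 'I_n) : i != j -> [set i; j] \subset psupp (tperm i j).
Proof. by move=> ij; rewrite subUset !sub1set !inE tpermL tpermR eq_sym ij. Qed.

Lemma perm_on_pair (i j : 'I_n) g : perm_on [set i; j] g -> g = 1 \/ g = tperm i j.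
Proof.
have fix_i h : perm_on [set i; j] h -> h i = i -> h = 1.
  move=> onh hi; apply: (@perm_on_id _ _ [set j]); last by rewrite cards1.
  apply/subsetP => m /[!inE] hm; have := subsetP onh m hm.
  by rewrite !inE => /orP[/eqP mi|//]; rewrite mi hi eqxx in hm.
move=> ong; have [gi|ngi] := eqVneq (g i) i; first by left; exact: fix_i.
have gi : g i = j.
  by have := perm_closed i ong; rewrite !inE eqxx (negbTE ngi) => /eqP.
right; have /(fix_i _) h1 : perm_on [set i; j] (g * tperm i j).
  by apply: perm_onM => //; exact: tperm_on.
by rewrite -[g]mulg1 -(tperm2 i j) mulgA h1 ?mul1g // permM gi tpermR.
Qed.

Lemma supp_in_pair T x y w : #|T| <= 2 -> is_transp (y * x^-1) ->
  psupp (y * x^-1) \subset T -> psupp (w * x^-1) \subset T -> w = x \/ w = y.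
Proof.
move=> T2 /existsP[i /existsP[j /andP[ij /eqP yx]]] yxT wxT.
have ijT : [set i; j] = T.
  apply/eqP; rewrite eqEcard cards2 ij (leq_trans T2) // andbT.
  by apply: subset_trans yxT; rewrite yx mem_psupp_tperm.
move: wxT; rewrite -ijT psupp_perm_on => /perm_on_pair[] wx.
  by left; rewrite -(mulgKV x w) wx mul1g.
by right; rewrite -(mulgKV x w) wx -yx mulgKV.
Qed.

End PermSupport.

Section CycleSupport.
Variable n : nat.
Local Open Scope group_scope.
Implicit Types (c p q s t : seq 'S_n) (G : rel 'S_n).

(* Along a walk x :: s (followed by t), each w x^-1 is the product of the
   edge permutations from x to w, so its support lies in the edge supports. *)
Lemma walk_supp x s t w : w \in x :: s ->
  psupp (w * x^-1) \subset \bigcup_(e <- zip (x :: s) (s ++ t)) edge_supp e.1 e.2.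
Proof.
elim: s x => [|z s IH] x /=.
  by rewrite inE => /eqP ->; rewrite mulgV psupp_perm_on perm_on1.
rewrite inE big_cons => /predU1P[->|ws]; first by rewrite mulgV psupp_perm_on perm_on1.
rewrite -(mulgKV z w) -mulgA; apply: subset_trans (psuppM _ _) _.
by rewrite setUC setUSS ?IH.
Qed.

Lemma cycle_edges_rot r c : cycle_edges (rot r c) = rot r (cycle_edges c).
Proof. by rewrite /cycle_edges rot_rot rot_zip // size_rot. Qed.

Lemma cycle_supp_rot r c : cycle_supp (rot r c) = cycle_supp c.
Proof. by rewrite /cycle_supp cycle_edges_rot; apply: perm_big; rewrite perm_rot. Qed.

Lemma vertex_supp c x w : x \in c -> w \in c -> psupp (w * x^-1) \subset cycle_supp c.
Proof.
case/rot_to=> r s xs; rewrite -(mem_rot r) -(cycle_supp_rot r) xs => ws.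
by rewrite /cycle_supp /cycle_edges rot1_cons -cats1; exact: walk_supp.
Qed.

Lemma common_vertex c c' x y w : #|cycle_supp c :&: cycle_supp c'| <= 2 ->
  is_transp (y * x^-1) -> x \in c -> y \in c -> x \in c' -> y \in c' ->
  w \in c -> w \in c' -> w = x \/ w = y.
Proof.
move=> small yx xc yc xc' yc' wc wc'.
by apply: (supp_in_pair small yx); rewrite subsetI !vertex_supp.
Qed.

Lemma rot_to_edge c e : 2 <= size c -> e \in cycle_edges c ->
  exists r p, rot r c = e.1 :: e.2 :: p.
Proof.
move=> c2 /rot_to[r s ers]; exists r.
move: c2 ers; rewrite -cycle_edges_rot -(size_rot r).
case: (rot r c) => [|u [|v p]] // _.
by rewrite /cycle_edges rot1_cons => -[<-]; exists p.
Qed.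

Lemma cycle_through_edge G c x y : symmetric G -> 2 <= size c -> uniq c ->
  path.cycle G c -> ((x, y) \in cycle_edges c) || ((y, x) \in cycle_edges c) ->
  exists p, [/\ G x y, uniq [:: x, y & p], path G y (rcons p x)
              & perm_eq [:: x, y & p] c].
Proof.
move=> Gsym c2 uc cc /orP[] /(rot_to_edge c2)[r [p crot]].
  have {}crot : rot r c = [:: x, y & p] := crot.
  move: uc cc; rewrite -(rot_uniq r) -(rot_cycle r) crot => uc /= /andP[Gxy pathp].
  by exists p; rewrite -crot perm_rot.
have {}crot : rot r c = [:: y, x & p] := crot.
move: uc cc; rewrite -(rot_uniq r) -(rot_cycle r) crot.
move=> /= /and3P[yxp xp up] /andP[Gyx pathp]; exists (rev p); split.
- by rewrite Gsym.
- move: yxp; rewrite /= !inE !mem_rev rev_uniq negb_or => /andP[yx yp].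
  by rewrite negb_or (eq_sym x) yx xp yp up.
- have := rev_path G x (rcons p y).
  rewrite last_rcons belast_rcons rev_cons => ->.
  by rewrite (eq_path (e' := G)) // => u v; rewrite Gsym.
- rewrite perm_sym -(perm_rot r) crot perm_sym (perm_catCA [:: x] [:: y]) /=.
  by rewrite !perm_cons perm_rev.
Qed.

Lemma glue_paths G x y p q : uniq [:: x, y & p] -> uniq [:: y, x & q] ->
  path G y (rcons p x) -> path G x (rcons q y) ->
  (forall w, w \in p -> w \in q -> False) ->
  uniq ((y :: p) ++ (x :: q)) && path.cycle G ((y :: p) ++ (x :: q)).
Proof.
move=> up uq pathp pathq disj; rewrite /= !inE !negb_or in up uq.
case/and3P: up => /andP[xy xp] yp up; case/and3P: uq => /andP[_ yq] xq uq.
apply/andP; split.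
  rewrite cat_uniq /= yp up xq uq !inE !negb_or xy xp /= andbT.
  apply/hasPn => w wq; rewrite !inE negb_or; apply/andP; split.
    by apply: contraNneq yq => <-.
  by apply/negP => wp; exact: disj wp wq.
move: pathp; rewrite /= rcons_cat cat_path rcons_path => /andP[-> Gxy].
by rewrite /= Gxy pathq.
Qed.

End CycleSupport.

Theorem lemma3p2 (n k a b : nat) (G : rel 'S_n) (C C' : seq 'S_n) :
  3 <= n -> 2 <= k -> 2 <= a -> 2 <= b -> a + b = k + 1 ->
  spanning_subgraph_CT G ->
  (forall c : seq 'S_n, ~~ is_cycle_of_length G (4 * k + 2) c) ->
  is_cycle_of_length G (4 * a) C ->
  is_cycle_of_length G (4 * b) C' ->
  common_edge C C' ->
  3 <= #|cycle_supp C :&: cycle_supp C'|.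
Proof.
move=> _ k2 a2 b2 ab [Gsym Gct] noC /and4P[_ /eqP sC uC cC]
  /and4P[_ /eqP sC' uC' cC'] /hasP[[x y] xyC xyC'].
have C2 : 2 <= size C by rewrite sC (leq_trans a2) ?leq_pmull.
have C'2 : 2 <= size C' by rewrite sC' (leq_trans b2) ?leq_pmull.
have [p [Gxy up pathp Cp]] := cycle_through_edge Gsym C2 uC cC (introT orP (or_introl xyC)).
have [q [_ uq pathq C'q]] := cycle_through_edge Gsym C'2 uC' cC' (etrans (orbC _ _) xyC').
rewrite ltnNge; apply/negP => small.
(* Under the small overlap, the two paths share no internal vertex. *)
have disj w : w \in p -> w \in q -> False.
  move=> wp wq; have : w = x \/ w = y.
    apply: (common_vertex small (Gct _ _ Gxy));
      by rewrite -?(perm_mem Cp) -?(perm_mem C'q) !inE ?eqxx ?wp ?wq ?orbT.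
  by case=> wxy; move: up; rewrite -wxy /= !inE wp ?orbT /= ?andbF.
have /andP[uD cD] := glue_paths up uq pathp pathq disj.
(* The glued cycle has 4a - 2 + 4b - 2 + 2 = 4k + 2 vertices. *)
apply: (negP (noC ((y :: p) ++ (x :: q)))).
rewrite /is_cycle_of_length uD cD size_cat /= !andbT.
have /= := perm_size Cp; have /= := perm_size C'q; rewrite sC sC'.
by move: (size p) (size q) => i j; clear -k2 ab; lia.
Qed.
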